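(* Let $\alpha_a$ be a labeled dGL hybrid game, $\varphi$ a dGL formula, and $S$ an inductive Angelic subvalue map for $\alpha_a$ with $\models S(\mathsf{end})\rightarrow\varphi$. Then for every subgame label $b\in\mathrm{nodes}(\alpha_a)$, every state satisfying $S(a)$ satisfies $$\big\langle \mathrm{prefix}_b(\mathcal{U}(\alpha_a,S))\big\rangle\,\big\langle \mathrm{suffix}_b(\mathcal{P}(\alpha_a,S))\big\rangle\,\varphi .$$
   Context: Differential game logic (dGL). Hybrid games are generated by $\alpha,\beta ::= x:=e \mid \alpha;\beta \mid ?Q \mid \{x'=f(x)\,\&\,Q\} \mid \alpha^{*} \mid \alpha\cup\beta \mid x:=* \mid\ !Q \mid \{x'=f(x)\,\&\,Q\}^{d} \mid \alpha^{\times} \mid \alpha\cap\beta \mid x:=\otimes$, with $x$ a real variable (vector for ODEs), $e,f(x)$ polynomial terms, $Q$ a formula. Players Angel and Demon: $x:=e$ deterministic assignment; in $x:=*$ Angel (in $x:=\otimes$ Demon) assigns any real to $x$; in $\{x'=f(x)\&Q\}$ Angel (in $\{x'=f(x)\&Q\}^d$ Demon) chooses a duration $r\ge 0$ of following the ODE with $Q$ true throughout; $?Q$ makes Angel lose and $!Q$ makes Demon lose if $Q$ is false (no effect otherwise); in $\alpha\cup\beta$ Angel (in $\alpha\cap\beta$ Demon) chooses the branch; in $\alpha^*$ Angel (in $\alpha^\times$ Demon) decides before each iteration whether to repeat $\alpha$ or stop; $\alpha;\beta$ is sequential composition. $\mathrm{skip}$ denotes $?\mathit{true}$. Formulas: polynomial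 (in)equalities closed under connectives, real quantifiers, and modalities $\langle\alpha\rangle\varphi$ (Angel has a winning strategy in $\alpha$ to reach $\varphi$ whatever Demon does) and $[\alpha]\varphi\equiv\neg\langle\alpha\rangle\neg\varphi$, with the standard dGL semantics: $\langle x:=e\rangle\varphi\leftrightarrow\varphi(x\mapsto e)$, $\langle x:=*\rangle\varphi\leftrightarrow\exists x\varphi$, $\langle x:=\otimes\rangle\varphi\leftrightarrow\forall x\varphi$, $\langle ?Q\rangle\varphi\leftrightarrow Q\wedge\varphi$, $\langle !Q\rangle\varphi\leftrightarrow(Q\rightarrow\varphi)$, $\langle\alpha\cup\beta\rangle\varphi\leftrightarrow\langle\alpha\rangle\varphi\vee\langle\beta\rangle\varphi$, $\langle\alpha\cap\beta\rangle\varphi\leftrightarrow\langle\alpha\rangle\varphi\wedge\langle\beta\rangle\varphi$, $\langle\alpha;\beta\rangle\varphi\leftrightarrow\langle\alpha\rangle\langle\beta\rangle\varphi$; the Angel ODE holds iff some solution of some duration $r\ge0$ staying in $Q$ ends in $\varphi$, the Demon ODE iff all such solutions end in $\varphi$; $\langle\alpha^*\rangle\varphi$ denotes the least set $Z$ of states with $[\![\varphi]\!]\cup\varsigma_\alpha(Z)\subseteq Z$ and $\langle\alpha^\times\rangle\varphi$ the greatest $Z$ with $Z\subseteq[\![\varphi]\!]\cap\varsigma_\alpha(Z)$, where $\varsigma_\alpha(Z)$ is Angel's winning region in $\alpha$ for goal $Z$. $\models\psi$ means $\psi$ is valid. Labels. Every node of the syntax tree of a game carries a unique label. $\alpha_a$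 is a game whose root has label $a$; $\mathrm{nodes}(\alpha_a)$ is the set of labels of its subgames (including $a$). A special label $\mathsf{end}\notin\mathrm{nodes}(\alpha_a)$ is used. A map $S$ assigns formulas to a set of labels containing $\mathrm{nodes}(\alpha_a)\cup\{\mathsf{end}\}$; $S\{\mathsf{end}\mapsto Q\}$ is $S$ with the value at $\mathsf{end}$ replaced by $Q$. Below $\gamma_g,\delta_d$ denote immediate subgames with root labels $g,d$. Game suffix $\mathrm{suffix}_b(\alpha_a)$ for a label $b$ of a subgame: if $b=a$, it is $\alpha_a$. Otherwise: for $\alpha_a=((\gamma_g)^* )_a$ or $((\gamma_g)^\times)_a$ it is $\mathrm{suffix}_b(\gamma_g);\alpha_a$; for $(\gamma_g\cup\delta_d)_a$ or $(\gamma_g\cap\delta_d)_a$ it is the suffix within the branch containing $b$; for $(\gamma_g;\delta_d)_a$ it is $\mathrm{suffix}_b(\gamma_g);\delta_d$ if $b\in\mathrm{nodes}(\gamma_g)$ and $\mathrm{suffix}_b(\delta_d)$ otherwise. Game prefix $\mathrm{prefix}_b(\alpha_a)$: if $b=a$ and $\alpha$ is not a loop, it is $\mathrm{skip}$; if $b=a$ and $\alpha$ is a loop, it is $\alpha_a$. Otherwise: for loops $((\gamma_g)^* )_a,((\gamma_g)^\times)_a$ it is $\alpha_a;\mathrm{prefix}_b(\gamma_g)$; for $\cup,\cap$ the prefix within the branch containing $b$; for $(\gamma_g;\delta_d)_a$ it is $\mathrm{prefix}_b(\gamma_g)$ if $b\in\mathrm{nodes}(\gamma_g)$ and $\gamma_g;\mathrm{prefix}_b(\delta_d)$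 otherwise. Existential projection $\mathcal{P}(\alpha_a,S)$: $(x:=* )_a\mapsto(x:=* )_a;?S(\mathsf{end})$; $\{x'=f(x)\&Q\}_a\mapsto\{x'=f(x)\&Q\}_a;?S(\mathsf{end})$; $(\gamma_g\cup\delta_d)_a\mapsto(?S(g);\mathcal{P}(\gamma_g,S))\cup_a(?S(d);\mathcal{P}(\delta_d,S))$; $((\gamma_g)^* )_a\mapsto\big((?S(g);\mathcal{P}(\gamma_g,S\{\mathsf{end}\mapsto S(a)\}))^*\big)_a;?S(\mathsf{end})$; $(\gamma_g;\delta_d)_a\mapsto\mathcal{P}(\gamma_g,S\{\mathsf{end}\mapsto S(d)\});_a\mathcal{P}(\delta_d,S)$; $(\gamma_g\cap\delta_d)_a\mapsto\mathcal{P}(\gamma_g,S)\cap_a\mathcal{P}(\delta_d,S)$; $((\gamma_g)^\times)_a\mapsto(\mathcal{P}(\gamma_g,S\{\mathsf{end}\mapsto S(a)\})^\times)_a$; $x:=e,x:=\otimes,?Q,!Q,\{x'=f(x)\&Q\}^d$ unchanged. The node replacing the node labeled $a$ keeps label $a$, subgames keep their labels, new nodes get fresh labels. Universal projection $\mathcal{U}(\alpha_a,S)$: $(x:=* )_a\mapsto (x:=\otimes)_a;\,!S(\mathsf{end})$; $\{x'=f(x)\&Q\}_a\mapsto(\{x'=f(x)\&Q\}^d)_a;\,!S(\mathsf{end})$; $(\gamma_g\cup\delta_d)_a\mapsto(!S(g);\mathcal{U}(\gamma_g,S))\cap_a(!S(d);\mathcal{U}(\delta_d,S))$; $((\gamma_g)^*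 )_a\mapsto\big((!S(g);\mathcal{U}(\gamma_g,S\{\mathsf{end}\mapsto S(a)\}))^{\times}\big)_a;\,!S(\mathsf{end})$; $(\gamma_g;\delta_d)_a\mapsto\mathcal{U}(\gamma_g,S\{\mathsf{end}\mapsto S(d)\});_a\mathcal{U}(\delta_d,S)$; $(\gamma_g\cap\delta_d)_a\mapsto\mathcal{U}(\gamma_g,S)\cap_a\mathcal{U}(\delta_d,S)$; $((\gamma_g)^\times)_a\mapsto(\mathcal{U}(\gamma_g,S\{\mathsf{end}\mapsto S(a)\})^\times)_a$; $x:=e,x:=\otimes,?Q,!Q,\{x'=f(x)\&Q\}^d$ unchanged. The node replacing the node labeled $a$ (the Demon counterpart, $\cap$, or $^\times$) keeps label $a$, subgames keep labels, new nodes get fresh labels. Inductive Angelic subvalue map: $S$ is one for $\alpha_a$ (written $S\Vdash\alpha_a$) when recursively: if $\alpha$ is atomic ($x:=e,x:=*,x:=\otimes,?Q,!Q$, an Angel or Demon ODE) then $\models S(a)\rightarrow\langle\alpha\rangle S(\mathsf{end})$; if $(\gamma_g\cup\delta_d)_a$ then $\models S(a)\rightarrow S(g)\vee S(d)$, $S\Vdash\gamma_g$, $S\Vdash\delta_d$; if $(\gamma_g\cap\delta_d)_a$ then $\models S(a)\rightarrow S(g)\wedge S(d)$, $S\Vdash\gamma_g$, $S\Vdash\delta_d$; if $(\gamma_g;\delta_d)_a$ then $\models S(a)\rightarrow S(g)$, $S\{\mathsf{end}\mapsto S(d)\}\Vdash\gamma_g$, $S\Vdash\delta_d$; if $((\gamma_g)^*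 )_a$ then $\models S(a)\rightarrow\langle\mathcal{P}(\alpha_a,S)\rangle S(\mathsf{end})$ and $S\{\mathsf{end}\mapsto S(a)\}\Vdash\gamma_g$; if $((\gamma_g)^\times)_a$ then $\models S(a)\rightarrow S(g)\wedge S(\mathsf{end})$ and $S\{\mathsf{end}\mapsto S(a)\}\Vdash\gamma_g$. *)

From Stdlib Require Import Reals QArith Qreals List Bool Arith.
Open Scope R_scope.

(* LOrig n : labels of the input game; LFresh a k : the k-th fresh label created
   by a projection at the node labeled a; LEnd : the special label end. *)
Inductive lbl : Type :=
| LOrig (n : nat)
| LFresh (a : lbl) (k : nat)
| LEnd.

Fixpoint lbl_eqb (l1 l2 : lbl) : bool :=
  match l1, l2 with
  | LOrig n, LOrig m => Nat.eqb n m
  | LFresh a k, LFresh b j => lbl_eqb a b && Nat.eqb k j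
  | LEnd, LEnd => true
  | _, _ => false
  end.

Definition var := nat.
Definition state := var -> R.

Inductive term : Type :=
| TVar (x : var)
| TConst (q : Q)
| TNeg (e : term)
| TPlus (e1 e2 : term)
| TTimes (e1 e2 : term).

Inductive fml : Type :=
| FTrue | FFalse
| FEq (e1 e2 : term) | FGe (e1 e2 : term) | FGt (e1 e2 : term)
| FNot (p : fml) | FAnd (p q : fml) | FOr (p q : fml) | FImp (p q : fml)
| FAll (x : var) (p : fml) | FEx (x : var) (p : fml)
| FDia (g : game) (p : fml)
| FBox (g : game) (p : fml)
with game : Type :=
| GAsgn (a : lbl) (x : var) (e : term)
| GRand (a : lbl) (x : var)
| GDRand (a : lbl) (x : var)
| GTest (a : lbl) (Q : fml)
| GDTest (a : lbl) (Q : fml)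
| GODE (a : lbl) (ode : list (var * term)) (Q : fml)
| GDODE (a : lbl) (ode : list (var * term)) (Q : fml)
| GSeq (a : lbl) (g1 g2 : game)
| GChoice (a : lbl) (g1 g2 : game)
| GDChoice (a : lbl) (g1 g2 : game)
| GStar (a : lbl) (g : game)
| GCross (a : lbl) (g : game).

Definition glabel (g : game) : lbl :=
  match g with
  | GAsgn a _ _ | GRand a _ | GDRand a _ | GTest a _ | GDTest a _
  | GODE a _ _ | GDODE a _ _ | GSeq a _ _ | GChoice a _ _ | GDChoice a _ _
  | GStar a _ | GCross a _ => a
  end.

Fixpoint nodes (g : game) : list lbl :=
  match g with
  | GSeq a g1 g2 | GChoice a g1 g2 | GDChoice a g1 g2 => a :: nodes g1 ++ nodes g2
  | GStar a g1 | GCross a g1 => a :: nodes g1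
  | _ => glabel g :: nil
  end.

Definition in_nodes (b : lbl) (g : game) : bool := existsb (lbl_eqb b) (nodes g).

Definition well_labeled (g : game) : Prop :=
  NoDup (nodes g) /\ Forall (fun l => exists n, l = LOrig n) (nodes g).

Definition skip_lbl : lbl := LFresh LEnd 0.
Definition skip : game := GTest skip_lbl FTrue.

Fixpoint term_sem (e : term) (w : state) : R :=
  match e with
  | TVar x => w x
  | TConst q => Q2R q
  | TNeg e1 => - term_sem e1 w
  | TPlus e1 e2 => term_sem e1 w + term_sem e2 w
  | TTimes e1 e2 => term_sem e1 w * term_sem e2 w
  end.

Definition upd (w : state) (x : var) (v : R) : state :=
  fun y => if Nat.eqb y x then v else w y.

(* phi : [0,r] -> states is a solution of {ode & Q} from w of duration r:
   phi 0 = w, variables not in the ode stay constant, Q holds throughout, and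
   for each (x, e) in ode the (one-sided at the endpoints) time derivative of
   phi(.)(x) on [0,r] is the value of e. *)
Definition ode_solution (QS : state -> Prop) (ode : list (var * term))
    (w : state) (r : R) (phi : R -> state) : Prop :=
  0 <= r /\
  (forall y, phi 0 y = w y) /\
  (forall t, 0 <= t <= r -> QS (phi t)) /\
  (forall y t, 0 <= t <= r -> ~ In y (map fst ode) -> phi t y = w y) /\
  (forall x e t, In (x, e) ode -> 0 <= t <= r ->
     forall eps, 0 < eps -> exists delta, 0 < delta /\
       forall s, 0 <= s <= r -> s <> t -> Rabs (s - t) < delta ->
         Rabs ((phi s x - phi t x) / (s - t) - term_sem e (phi t)) < eps).

Fixpoint fml_sem (p : fml) (w : state) {struct p} : Prop :=
  match p with
  | FTrue => True
  | FFalse => False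
  | FEq e1 e2 => term_sem e1 w = term_sem e2 w
  | FGe e1 e2 => term_sem e1 w >= term_sem e2 w
  | FGt e1 e2 => term_sem e1 w > term_sem e2 w
  | FNot q => ~ fml_sem q w
  | FAnd q1 q2 => fml_sem q1 w /\ fml_sem q2 w
  | FOr q1 q2 => fml_sem q1 w \/ fml_sem q2 w
  | FImp q1 q2 => fml_sem q1 w -> fml_sem q2 w
  | FAll x q => forall v, fml_sem q (upd w x v)
  | FEx x q => exists v, fml_sem q (upd w x v)
  | FDia g q => game_sem g (fml_sem q) w
  | FBox g q => ~ game_sem g (fun v => ~ fml_sem q v) w
  end
(* game_sem g X = Angel's winning region in g for goal X *)
with game_sem (g : game) (X : state -> Prop) (w : state) {struct g} : Prop :=
  match g with
  | GAsgn _ x e => X (upd w x (term_sem e w))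
  | GRand _ x => exists v, X (upd w x v)
  | GDRand _ x => forall v, X (upd w x v)
  | GTest _ Q => fml_sem Q w /\ X w
  | GDTest _ Q => fml_sem Q w -> X w
  | GODE _ ode Q =>
      exists r phi, ode_solution (fml_sem Q) ode w r phi /\ X (phi r)
  | GDODE _ ode Q =>
      forall r phi, ode_solution (fml_sem Q) ode w r phi -> X (phi r)
  | GSeq _ g1 g2 => game_sem g1 (game_sem g2 X) w
  | GChoice _ g1 g2 => game_sem g1 X w \/ game_sem g2 X w
  | GDChoice _ g1 g2 => game_sem g1 X w /\ game_sem g2 X w
  | GStar _ g1 =>   (* least Z with X u game_sem g1 Z <= Z *)
      forall Z : state -> Prop,
        (forall v, X v \/ game_sem g1 Z v -> Z v) -> Z w
  | GCross _ g1 =>  (* greatest Z with Z <= X n game_sem g1 Z *)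
      exists Z : state -> Prop,
        Z w /\ (forall v, Z v -> X v /\ game_sem g1 Z v)
  end.

Definition valid (p : fml) : Prop := forall w, fml_sem p w.

Fixpoint suffix (b : lbl) (g : game) : game :=
  if lbl_eqb b (glabel g) then g else
  match g with
  | GStar a g1 | GCross a g1 => GSeq (LFresh a 0) (suffix b g1) g
  | GChoice _ g1 g2 | GDChoice _ g1 g2 =>
      if in_nodes b g1 then suffix b g1 else suffix b g2
  | GSeq a g1 g2 =>
      if in_nodes b g1 then GSeq (LFresh a 0) (suffix b g1) g2 else suffix b g2
  | _ => g  (* b not a node: irrelevant *)
  end.

Fixpoint prefix (b : lbl) (g : game) : game :=
  match g with
  | GStar a g1 | GCross a g1 =>
      if lbl_eqb b a then g else GSeq (LFresh a 0) g (prefix b g1)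
  | GChoice a g1 g2 | GDChoice a g1 g2 =>
      if lbl_eqb b a then skip else
      if in_nodes b g1 then prefix b g1 else prefix b g2
  | GSeq a g1 g2 =>
      if lbl_eqb b a then skip else
      if in_nodes b g1 then prefix b g1 else GSeq (LFresh a 0) g1 (prefix b g2)
  | _ => skip
  end.

Definition supd (S : lbl -> fml) (Q : fml) : lbl -> fml :=
  fun l => match l with LEnd => Q | _ => S l end.

Fixpoint proj_ex (g : game) (S : lbl -> fml) : game :=
  match g with
  | GRand a x => GSeq (LFresh a 0) (GRand a x) (GTest (LFresh a 1) (S LEnd))
  | GODE a ode Q => GSeq (LFresh a 0) (GODE a ode Q) (GTest (LFresh a 1) (S LEnd))
  | GChoice a g1 g2 =>
      GChoice a
        (GSeq (LFresh a 0) (GTest (LFresh a 1) (S (glabel g1))) (proj_ex g1 S))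
        (GSeq (LFresh a 2) (GTest (LFresh a 3) (S (glabel g2))) (proj_ex g2 S))
  | GStar a g1 =>
      GSeq (LFresh a 0)
        (GStar a (GSeq (LFresh a 1) (GTest (LFresh a 2) (S (glabel g1)))
                                   (proj_ex g1 (supd S (S a)))))
        (GTest (LFresh a 3) (S LEnd))
  | GSeq a g1 g2 => GSeq a (proj_ex g1 (supd S (S (glabel g2)))) (proj_ex g2 S)
  | GDChoice a g1 g2 => GDChoice a (proj_ex g1 S) (proj_ex g2 S)
  | GCross a g1 => GCross a (proj_ex g1 (supd S (S a)))
  | _ => g
  end.

Fixpoint proj_un (g : game) (S : lbl -> fml) : game :=
  match g with
  | GRand a x => GSeq (LFresh a 0) (GDRand a x) (GDTest (LFresh a 1) (S LEnd))
  | GODE a ode Q => GSeq (LFresh a 0) (GDODE a ode Q) (GDTest (LFresh a 1) (S LEnd))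
  | GChoice a g1 g2 =>
      GDChoice a
        (GSeq (LFresh a 0) (GDTest (LFresh a 1) (S (glabel g1))) (proj_un g1 S))
        (GSeq (LFresh a 2) (GDTest (LFresh a 3) (S (glabel g2))) (proj_un g2 S))
  | GStar a g1 =>
      GSeq (LFresh a 0)
        (GCross a (GSeq (LFresh a 1) (GDTest (LFresh a 2) (S (glabel g1)))
                                    (proj_un g1 (supd S (S a)))))
        (GDTest (LFresh a 3) (S LEnd))
  | GSeq a g1 g2 => GSeq a (proj_un g1 (supd S (S (glabel g2)))) (proj_un g2 S)
  | GDChoice a g1 g2 => GDChoice a (proj_un g1 S) (proj_un g2 S)
  | GCross a g1 => GCross a (proj_un g1 (supd S (S a)))
  | _ => g
  end.

Fixpoint isv (S : lbl -> fml) (g : game) : Prop :=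
  match g with
  | GChoice a g1 g2 =>
      valid (FImp (S a) (FOr (S (glabel g1)) (S (glabel g2)))) /\ isv S g1 /\ isv S g2
  | GDChoice a g1 g2 =>
      valid (FImp (S a) (FAnd (S (glabel g1)) (S (glabel g2)))) /\ isv S g1 /\ isv S g2
  | GSeq a g1 g2 =>
      valid (FImp (S a) (S (glabel g1))) /\ isv (supd S (S (glabel g2))) g1 /\ isv S g2
  | GStar a g1 =>
      valid (FImp (S a) (FDia (proj_ex g S) (S LEnd))) /\ isv (supd S (S a)) g1
  | GCross a g1 =>
      valid (FImp (S a) (FAnd (S (glabel g1)) (S LEnd))) /\ isv (supd S (S a)) g1
  | _ =>
      valid (FImp (S (glabel g)) (FDia g (S LEnd)))
  end.

(* Write a for the root label of alpha.  Both projections are winning from S(a)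
   for the goal S(end), by induction on alpha.  In P(alpha,S) Angel resolves each
   choice towards a branch whose subvalue holds; for a loop alpha^* the subvalue
   map demands exactly this claim, and a Demon loop alpha^x is won with the
   invariant S(a).  In U(alpha,S) Angel's choices and loops become Demon's, but
   each is guarded by a test !S(.), so Demon loses as soon as he leaves the
   subvalues; every Demon loop of U(alpha,S) is again won with the invariant S(a).
   Following the path from a to b, the same arguments show that the prefix of
   U(alpha,S) up to b reaches S(b) from S(a), and that the suffix of P(alpha,S)
   from b reaches S(end) from S(b); composing the two and weakening S(end) to phi
   gives the theorem. *)

From Stdlib Require Import List Bool Arith.

Lemma game_sem_mono g (X Y : state -> Prop) :
  (forall v, X v -> Y v) -> forall w, game_sem g X w -> game_sem g Y w.
Proof. revert X Y; induction g; simpl; firstorder. Qed.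

Lemma game_sem_seq a g1 g2 X w :
  game_sem g1 (game_sem g2 X) w -> game_sem (GSeq a g1 g2) X w.
Proof. exact (fun H => H). Qed.

Lemma game_sem_cross_intro a g (I X : state -> Prop) w :
  (forall v, I v -> X v) -> (forall v, I v -> game_sem g I v) -> I w ->
  game_sem (GCross a g) X w.
Proof. intros HX Hg Hw; exists I; auto. Qed.

Lemma lbl_eqb_eq l1 l2 : lbl_eqb l1 l2 = true <-> l1 = l2.
Proof.
  revert l2; induction l1 as [n|a IH k|]; intros [m|b j|]; simpl;
    try (split; congruence).
  - rewrite Nat.eqb_eq; split; congruence.
  - rewrite andb_true_iff, IH, Nat.eqb_eq.
    split; [intros [-> ->]; reflexivity | intros E; injection E; auto].
Qed.

Lemma lbl_eqb_spec l1 l2 : reflect (l1 = l2) (lbl_eqb l1 l2).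
Proof. apply iff_reflect, iff_sym, lbl_eqb_eq. Qed.

Lemma lbl_eqb_neq l1 l2 : l1 <> l2 -> lbl_eqb l1 l2 = false.
Proof. destruct (lbl_eqb_spec l1 l2); congruence. Qed.

Lemma in_nodesP b g : reflect (In b (nodes g)) (in_nodes b g).
Proof.
  apply iff_reflect; unfold in_nodes; rewrite existsb_exists; split.
  - intros Hb; exists b; split; [exact Hb | apply lbl_eqb_eq; reflexivity].
  - intros [l [Hl Hbl]]; apply lbl_eqb_eq in Hbl; subst; exact Hl.
Qed.

Lemma in_nodes_true b g : In b (nodes g) -> in_nodes b g = true.
Proof. exact (proj1 (reflect_iff _ _ (in_nodesP b g))). Qed.

Lemma in_cons_app_r (b a : lbl) l1 l2 :
  In b (a :: l1 ++ l2) -> a <> b -> ~ In b l1 -> In b l2.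
Proof. intros [E|H] Ha H1; [contradiction|]; apply in_app_or in H; tauto. Qed.

Definition orig_lbl (l : lbl) : Prop := exists n, l = LOrig n.

Definition orig_labeled (g : game) : Prop := Forall orig_lbl (nodes g).

Lemma orig_labeled_glabel g : orig_labeled g -> exists n, glabel g = LOrig n.
Proof. intros Hg; destruct g; exact (Forall_inv Hg). Qed.

Lemma orig_labeled_binary a g1 g2 :
  Forall orig_lbl (a :: nodes g1 ++ nodes g2) ->
  orig_labeled g1 /\ orig_labeled g2.
Proof. intros H; apply Forall_app, (Forall_inv_tail H). Qed.

Lemma orig_labeled_unary a g :
  Forall orig_lbl (a :: nodes g) -> orig_labeled g.
Proof. exact (@Forall_inv_tail _ _ a (nodes g)). Qed.

Lemma orig_labeled_in g b : orig_labeled g -> In b (nodes g) -> exists n, b = LOrig n.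
Proof. intros Hg; exact (proj1 (Forall_forall _ _) Hg b). Qed.

Lemma supd_glabel S Q g : orig_labeled g -> supd S Q (glabel g) = S (glabel g).
Proof. intros Hg; destruct (orig_labeled_glabel g Hg) as [n ->]; reflexivity. Qed.

(* The projections only add [LFresh] labels, so an original label lies in the same
   subgames of alpha, P(alpha,S) and U(alpha,S); this keeps [prefix] and [suffix]
   on the path of alpha. *)
Lemma in_nodes_proj_ex n g S : in_nodes (LOrig n) (proj_ex g S) = in_nodes (LOrig n) g.
Proof.
  unfold in_nodes; revert S; induction g; intros S; simpl;
    rewrite ?existsb_app; simpl; rewrite ?IHg, ?IHg1, ?IHg2, ?orb_false_r; reflexivity.
Qed.

Lemma in_nodes_proj_un n g S : in_nodes (LOrig n) (proj_un g S) = in_nodes (LOrig n) g.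
Proof.
  unfold in_nodes; revert S; induction g; intros S; simpl;
    rewrite ?existsb_app; simpl; rewrite ?IHg, ?IHg1, ?IHg2, ?orb_false_r; reflexivity.
Qed.

Lemma in_nodes_star b a g : in_nodes b (GStar a g) = lbl_eqb b a || in_nodes b g.
Proof. reflexivity. Qed.

Lemma in_nodes_cross b a g : in_nodes b (GCross a g) = lbl_eqb b a || in_nodes b g.
Proof. reflexivity. Qed.

Lemma in_nodes_guard n a k j Q g :
  in_nodes (LOrig n) (GSeq (LFresh a k) (GTest (LFresh a j) Q) g) = in_nodes (LOrig n) g.
Proof. reflexivity. Qed.

Lemma in_nodes_dguard n a k j Q g :
  in_nodes (LOrig n) (GSeq (LFresh a k) (GDTest (LFresh a j) Q) g) = in_nodes (LOrig n) g.
Proof. reflexivity. Qed.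

Lemma proj_ex_win g S w :
  orig_labeled g -> isv S g -> fml_sem (S (glabel g)) w ->
  game_sem (proj_ex g S) (fml_sem (S LEnd)) w.
Proof.
  revert S w; induction g as [a x e|a x|a x|a Q|a Q|a ode Q|a ode Q
    |a g1 IH1 g2 IH2|a g1 IH1 g2 IH2|a g1 IH1 g2 IH2|a g1 IH1|a g1 IH1];
    intros S w Horig Hisv Hw; simpl in Hisv |- *.
  all: try exact (Hisv w Hw).
  - destruct (Hisv w Hw) as [v Hv]; eauto.
  - destruct (Hisv w Hw) as [r [phi [Hphi Hr]]]; eauto.
  - destruct (orig_labeled_binary _ _ _ Horig) as [Horig1 Horig2].
    destruct Hisv as [Ha [Hisv1 Hisv2]].
    apply game_sem_mono with (fml_sem (S (glabel g2))).
    + intros v Hv; exact (IH2 S v Horig2 Hisv2 Hv).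
    + apply (IH1 _ w Horig1 Hisv1). rewrite supd_glabel by exact Horig1. exact (Ha w Hw).
  - destruct (orig_labeled_binary _ _ _ Horig) as [Horig1 Horig2].
    destruct Hisv as [Ha [Hisv1 Hisv2]].
    destruct (Ha w Hw); [left|right]; split; auto.
  - destruct (orig_labeled_binary _ _ _ Horig) as [Horig1 Horig2].
    destruct Hisv as [Ha [Hisv1 Hisv2]].
    destruct (Ha w Hw); split; auto.
  - apply (proj1 Hisv w Hw).
  - pose proof (orig_labeled_unary _ _ Horig) as Horig1.
    destruct Hisv as [Ha Hisv1].
    exists (fml_sem (S a)); split; [exact Hw|].
    intros v Hv; destruct (Ha v Hv) as [Hg1 Hend]; split; [exact Hend|].
    apply (IH1 _ v Horig1 Hisv1). rewrite supd_glabel by exact Horig1. exact Hg1.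
Qed.

Lemma proj_un_win g S w :
  orig_labeled g -> isv S g -> fml_sem (S (glabel g)) w ->
  game_sem (proj_un g S) (fml_sem (S LEnd)) w.
Proof.
  revert S w; induction g as [a x e|a x|a x|a Q|a Q|a ode Q|a ode Q
    |a g1 IH1 g2 IH2|a g1 IH1 g2 IH2|a g1 IH1 g2 IH2|a g1 IH1|a g1 IH1];
    intros S w Horig Hisv Hw; simpl in Hisv |- *.
  all: try exact (Hisv w Hw).
  - intros v Hv; exact Hv.
  - intros r phi _ Hr; exact Hr.
  - destruct (orig_labeled_binary _ _ _ Horig) as [Horig1 Horig2].
    destruct Hisv as [Ha [Hisv1 Hisv2]].
    apply game_sem_mono with (fml_sem (S (glabel g2))).
    + intros v Hv; exact (IH2 S v Horig2 Hisv2 Hv).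
    + apply (IH1 _ w Horig1 Hisv1). rewrite supd_glabel by exact Horig1. exact (Ha w Hw).
  - destruct (orig_labeled_binary _ _ _ Horig) as [Horig1 Horig2].
    destruct Hisv as [Ha [Hisv1 Hisv2]].
    split; intros Hg; auto.
  - destruct (orig_labeled_binary _ _ _ Horig) as [Horig1 Horig2].
    destruct Hisv as [Ha [Hisv1 Hisv2]].
    destruct (Ha w Hw); split; auto.
  - pose proof (orig_labeled_unary _ _ Horig) as Horig1.
    destruct Hisv as [Ha Hisv1].
    exists (fml_sem (S a)); split; [exact Hw|].
    intros v Hv; split; [intros Hend; exact Hend|].
    intros Hg1; apply (IH1 _ v Horig1 Hisv1). rewrite supd_glabel by exact Horig1. exact Hg1.
  - pose proof (orig_labeled_unary _ _ Horig) as Horig1.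
    destruct Hisv as [Ha Hisv1].
    exists (fml_sem (S a)); split; [exact Hw|].
    intros v Hv; destruct (Ha v Hv) as [Hg1 Hend]; split; [exact Hend|].
    apply (IH1 _ v Horig1 Hisv1). rewrite supd_glabel by exact Horig1. exact Hg1.
Qed.

Lemma proj_un_loop_body_win a g S w :
  orig_labeled g -> isv (supd S (S a)) g -> fml_sem (S (glabel g)) w ->
  game_sem (proj_un g (supd S (S a))) (fml_sem (S a)) w.
Proof.
  intros Horig Hisv Hg; apply (proj_un_win g _ w Horig Hisv).
  rewrite supd_glabel by exact Horig; exact Hg.
Qed.

Lemma suffix_seq b a g1 g2 : b <> a ->
  suffix b (GSeq a g1 g2) =
  if in_nodes b g1 then GSeq (LFresh a 0) (suffix b g1) g2 else suffix b g2.
Proof. intros H; simpl; rewrite (lbl_eqb_neq _ _ H); reflexivity. Qed.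

Lemma suffix_choice b a g1 g2 : b <> a ->
  suffix b (GChoice a g1 g2) = if in_nodes b g1 then suffix b g1 else suffix b g2.
Proof. intros H; simpl; rewrite (lbl_eqb_neq _ _ H); reflexivity. Qed.

Lemma suffix_dchoice b a g1 g2 : b <> a ->
  suffix b (GDChoice a g1 g2) = if in_nodes b g1 then suffix b g1 else suffix b g2.
Proof. intros H; simpl; rewrite (lbl_eqb_neq _ _ H); reflexivity. Qed.

Lemma suffix_star b a g : b <> a ->
  suffix b (GStar a g) = GSeq (LFresh a 0) (suffix b g) (GStar a g).
Proof. intros H; simpl; rewrite (lbl_eqb_neq _ _ H); reflexivity. Qed.

Lemma suffix_cross b a g : b <> a ->
  suffix b (GCross a g) = GSeq (LFresh a 0) (suffix b g) (GCross a g).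
Proof. intros H; simpl; rewrite (lbl_eqb_neq _ _ H); reflexivity. Qed.

Lemma suffix_guard n a k j Q g :
  suffix (LOrig n) (GSeq (LFresh a k) (GTest (LFresh a j) Q) g) = suffix (LOrig n) g.
Proof. reflexivity. Qed.

(* Not an equation: when the root of the projection is a fresh sequence, [suffix]
   rebuilds it under another fresh label. *)
Lemma suffix_glabel_proj_ex g S X w :
  orig_labeled g -> game_sem (proj_ex g S) X w ->
  game_sem (suffix (glabel g) (proj_ex g S)) X w.
Proof.
  intros Horig; destruct (orig_labeled_glabel g Horig) as [n Hn].
  destruct g; simpl in Hn; subst;
    simpl; unfold in_nodes; simpl; rewrite ?Nat.eqb_refl; simpl; auto.
Qed.

Lemma suffix_proj_ex_win g S b w :
  orig_labeled g -> isv S g -> In b (nodes g) -> fml_sem (S b) w ->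
  game_sem (suffix b (proj_ex g S)) (fml_sem (S LEnd)) w.
Proof.
  intros Horig Hisv Hin; destruct (orig_labeled_in g b Horig Hin) as [n ->].
  revert S w Horig Hisv Hin; induction g as [a x e|a x|a x|a Q|a Q|a ode Q|a ode Q
    |a g1 IH1 g2 IH2|a g1 IH1 g2 IH2|a g1 IH1 g2 IH2|a g1 IH1|a g1 IH1];
    intros S w Horig Hisv Hin Hw; simpl in Hin.
  all: destruct (lbl_eqb_spec (LOrig n) a) as [<-|Hne];
    [exact (suffix_glabel_proj_ex _ S _ w Horig (proj_ex_win _ S w Horig Hisv Hw))|].
  1-7: destruct Hin as [E|[]]; congruence.
  1-3: destruct (orig_labeled_binary _ _ _ Horig) as [Horig1 Horig2];
    pose proof (in_cons_app_r _ _ _ _ Hin (not_eq_sym Hne)) as Hin2;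
    destruct Hisv as [_ [Hisv1 Hisv2]].
  4-5: pose proof (orig_labeled_unary _ _ Horig) as Horig1;
    pose proof Hisv as [_ Hisv1];
    destruct Hin as [E|Hin1]; [congruence|].
  - cbn [proj_ex]; rewrite suffix_seq, in_nodes_proj_ex by exact Hne.
    destruct (in_nodesP (LOrig n) g1) as [Hin1|Hnin1].
    + refine (game_sem_mono _ _ _ _ w (IH1 _ w Horig1 Hisv1 Hin1 Hw)).
      intros v Hv; exact (proj_ex_win g2 S v Horig2 Hisv2 Hv).
    + exact (IH2 S w Horig2 Hisv2 (Hin2 Hnin1) Hw).
  - cbn [proj_ex].
    rewrite suffix_choice, in_nodes_guard, !suffix_guard, in_nodes_proj_ex by exact Hne.
    destruct (in_nodesP (LOrig n) g1) as [Hin1|Hnin1].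
    + exact (IH1 S w Horig1 Hisv1 Hin1 Hw).
    + exact (IH2 S w Horig2 Hisv2 (Hin2 Hnin1) Hw).
  - cbn [proj_ex]; rewrite suffix_dchoice, in_nodes_proj_ex by exact Hne.
    destruct (in_nodesP (LOrig n) g1) as [Hin1|Hnin1].
    + exact (IH1 S w Horig1 Hisv1 Hin1 Hw).
    + exact (IH2 S w Horig2 Hisv2 (Hin2 Hnin1) Hw).
  - cbn [proj_ex]; rewrite suffix_seq by discriminate.
    rewrite in_nodes_star, in_nodes_guard, in_nodes_proj_ex, (lbl_eqb_neq _ _ Hne),
      (in_nodes_true _ _ Hin1), suffix_star, suffix_guard by exact Hne.
    refine (game_sem_mono _ _ _ _ w (IH1 _ w Horig1 Hisv1 Hin1 Hw)).
    intros v Hv; exact (proj_ex_win (GStar a g1) S v Horig Hisv Hv).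
  - cbn [proj_ex]; rewrite suffix_cross by exact Hne.
    refine (game_sem_mono _ _ _ _ w (IH1 _ w Horig1 Hisv1 Hin1 Hw)).
    intros v Hv; exact (proj_ex_win (GCross a g1) S v Horig Hisv Hv).
Qed.

Lemma prefix_seq b a g1 g2 : b <> a ->
  prefix b (GSeq a g1 g2) =
  if in_nodes b g1 then prefix b g1 else GSeq (LFresh a 0) g1 (prefix b g2).
Proof. intros H; simpl; rewrite (lbl_eqb_neq _ _ H); reflexivity. Qed.

Lemma prefix_dchoice b a g1 g2 : b <> a ->
  prefix b (GDChoice a g1 g2) = if in_nodes b g1 then prefix b g1 else prefix b g2.
Proof. intros H; simpl; rewrite (lbl_eqb_neq _ _ H); reflexivity. Qed.

Lemma prefix_cross b a g : b <> a ->
  prefix b (GCross a g) = GSeq (LFresh a 0) (GCross a g) (prefix b g).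
Proof. intros H; simpl; rewrite (lbl_eqb_neq _ _ H); reflexivity. Qed.

Lemma prefix_dguard n a k j Q g :
  prefix (LOrig n) (GSeq (LFresh a k) (GDTest (LFresh a j) Q) g) =
  GSeq (LFresh (LFresh a k) 0) (GDTest (LFresh a j) Q) (prefix (LOrig n) g).
Proof. reflexivity. Qed.

Lemma prefix_glabel_proj_un_win g S w :
  orig_labeled g -> isv S g -> fml_sem (S (glabel g)) w ->
  game_sem (prefix (glabel g) (proj_un g S)) (fml_sem (S (glabel g))) w.
Proof.
  intros Horig Hisv Hw; destruct (orig_labeled_glabel g Horig) as [n Hn].
  destruct g as [| | | | | | | | | | a g1|a g1]; simpl in Hn; subst;
    simpl; unfold in_nodes; simpl; rewrite ?Nat.eqb_refl; simpl.
  1-10: split; [exact I | exact Hw].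
  all: destruct Hisv as [Ha Hisv1]; pose proof (orig_labeled_unary _ _ Horig) as Horig1.
  all: exists (fml_sem (S (LOrig n))); split; [exact Hw|]; intros v Hv; split; [exact Hv|].
  - intros Hg1; exact (proj_un_loop_body_win _ g1 S v Horig1 Hisv1 Hg1).
  - exact (proj_un_loop_body_win _ g1 S v Horig1 Hisv1 (proj1 (Ha v Hv))).
Qed.

Lemma prefix_proj_un_win g S b w :
  orig_labeled g -> isv S g -> In b (nodes g) -> fml_sem (S (glabel g)) w ->
  game_sem (prefix b (proj_un g S)) (fml_sem (S b)) w.
Proof.
  intros Horig Hisv Hin; destruct (orig_labeled_in g b Horig Hin) as [n ->].
  revert S w Horig Hisv Hin; induction g as [a x e|a x|a x|a Q|a Q|a ode Q|a ode Q
    |a g1 IH1 g2 IH2|a g1 IH1 g2 IH2|a g1 IH1 g2 IH2|a g1 IH1|a g1 IH1];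
    intros S w Horig Hisv Hin Hw; simpl in Hin.
  all: destruct (lbl_eqb_spec (LOrig n) a) as [<-|Hne];
    [exact (prefix_glabel_proj_un_win _ S w Horig Hisv Hw)|].
  1-7: destruct Hin as [E|[]]; congruence.
  1-3: destruct (orig_labeled_binary _ _ _ Horig) as [Horig1 Horig2];
    pose proof (in_cons_app_r _ _ _ _ Hin (not_eq_sym Hne)) as Hin2;
    destruct Hisv as [Ha [Hisv1 Hisv2]].
  4-5: pose proof (orig_labeled_unary _ _ Horig) as Horig1;
    destruct Hisv as [Ha Hisv1];
    destruct Hin as [E|Hin1]; [congruence|].
  - assert (Hg1 : fml_sem (supd S (S (glabel g2)) (glabel g1)) w)
      by (rewrite supd_glabel by exact Horig1; exact (Ha w Hw)).
    cbn [proj_un]; rewrite prefix_seq, in_nodes_proj_un by exact Hne.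
    destruct (in_nodesP (LOrig n) g1) as [Hin1|Hnin1].
    + exact (IH1 _ w Horig1 Hisv1 Hin1 Hg1).
    + refine (game_sem_mono _ _ _ _ w (proj_un_win g1 _ w Horig1 Hisv1 Hg1)).
      intros v Hv; exact (IH2 S v Horig2 Hisv2 (Hin2 Hnin1) Hv).
  - cbn [proj_un].
    rewrite prefix_dchoice, in_nodes_dguard, !prefix_dguard, in_nodes_proj_un by exact Hne.
    destruct (in_nodesP (LOrig n) g1) as [Hin1|Hnin1]; intros Hg.
    + exact (IH1 S w Horig1 Hisv1 Hin1 Hg).
    + exact (IH2 S w Horig2 Hisv2 (Hin2 Hnin1) Hg).
  - destruct (Ha w Hw) as [Hg1 Hg2].
    cbn [proj_un]; rewrite prefix_dchoice, in_nodes_proj_un by exact Hne.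
    destruct (in_nodesP (LOrig n) g1) as [Hin1|Hnin1].
    + exact (IH1 S w Horig1 Hisv1 Hin1 Hg1).
    + exact (IH2 S w Horig2 Hisv2 (Hin2 Hnin1) Hg2).
  - cbn [proj_un]; rewrite prefix_seq by discriminate.
    rewrite in_nodes_cross, in_nodes_dguard, in_nodes_proj_un, (lbl_eqb_neq _ _ Hne),
      (in_nodes_true _ _ Hin1), prefix_cross, prefix_dguard by exact Hne.
    apply game_sem_seq, (game_sem_cross_intro a _ (fml_sem (S a))); [| |exact Hw].
    + intros v _ Hg1; apply (IH1 _ v Horig1 Hisv1 Hin1).
      rewrite supd_glabel by exact Horig1; exact Hg1.
    + intros v _ Hg1; exact (proj_un_loop_body_win a g1 S v Horig1 Hisv1 Hg1).
  - cbn [proj_un]; rewrite prefix_cross by exact Hne.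
    apply game_sem_seq, (game_sem_cross_intro a _ (fml_sem (S a))); [| |exact Hw].
    + intros v Hv; apply (IH1 _ v Horig1 Hisv1 Hin1).
      rewrite supd_glabel by exact Horig1; exact (proj1 (Ha v Hv)).
    + intros v Hv; exact (proj_un_loop_body_win a g1 S v Horig1 Hisv1 (proj1 (Ha v Hv))).
Qed.

Theorem mainTheorem2 (alpha : game) (phi : fml) (S : lbl -> fml) :
  well_labeled alpha ->
  isv S alpha ->
  valid (FImp (S LEnd) phi) ->
  forall b, In b (nodes alpha) ->
  forall w, fml_sem (S (glabel alpha)) w ->
    fml_sem (FDia (prefix b (proj_un alpha S))
                  (FDia (suffix b (proj_ex alpha S)) phi)) w.
Proof.
  intros [_ Horig] Hisv Hphi b Hb w Hw; simpl.
  refine (game_sem_mono _ _ _ _ w (prefix_proj_un_win alpha S b w Horig Hisv Hb Hw)).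
  intros v Hv.
  exact (game_sem_mono _ _ _ Hphi v (suffix_proj_ex_win alpha S b v Horig Hisv Hb Hv)).
Qed.
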